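(* For all integers $n\ge 2$ and $m\ge 1$, the number of tableaux $T\in\bigsqcup_{b\ge1,k\ge0,\,2b+k=n}\mathrm{SYT}^{+k}((b,b))$ whose top row contains exactly $m$ entries (counted over all cells of the top row) equals the Narayana number $$\frac{1}{m}\binom{n-1}{m-1}\binom{n-2}{m-1}.$$
   Context: $\mathrm{SYT}^{+k}(\lambda)$: for a partition $\lambda$ of $N$ and $k\ge 0$, the set of fillings $S$ of the cells of the Ferrers diagram of $\lambda$ by nonempty sets of positive integers forming a set partition of $[N+k]$, such that $\max S(u)<\min S(v)$ whenever $u\ne v$ and $u$ is weakly northwest of $v$. The shape $(b,b)$ is the $2\times b$ rectangle. *)

From mathcomp Require Import all_boot.
Set Implicit Arguments. Unset Strict Implicit. Unset Printing Implicit Defensive.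

(* Cells of the Ferrers diagram of the 2 x b rectangle (b,b), English
   convention: cell (r, c) with row r in {0 (top), 1 (bottom)} and column c.
   The integers 1..n are represented by 'I_n (i stands for i+1); this shift
   preserves the order. *)
Definition cell (b : nat) := ('I_2 * 'I_b)%type.

Definition weakly_nw (b : nat) (u v : cell b) : bool :=
  (u.1 <= v.1) && (u.2 <= v.2).

(* S is an element of SYT^{+k}((b,b)) with n = 2b + k:
   a filling of the cells by nonempty sets forming a set partition of [n],
   with max S(u) < min S(v) whenever u <> v and u weakly northwest of v. *)
Definition is_SYTplus (n b : nat) (S : {ffun cell b -> {set 'I_n}}) : bool :=
  [&& [forall u, S u != set0],
      [forall u, forall v, (u != v) ==> [disjoint S u & S v]],
      (\bigcup_(u : cell b) S u == [set: 'I_n]) &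
      [forall u, forall v, ((u != v) && weakly_nw u v) ==>
         [forall x in S u, forall y in S v, (x < y)%N]]].

Definition top_row_entries (n b : nat) (S : {ffun cell b -> {set 'I_n}}) : nat :=
  \sum_(c < b) #|S (ord0, c)|.

Definition count_b (n b m : nat) : nat :=
  #|[set S : {ffun cell b -> {set 'I_n}} |
       is_SYTplus S && (top_row_entries S == m)]|.

From mathcomp Require Import all_boot all_algebra zify ring.
Set Implicit Arguments. Unset Strict Implicit. Unset Printing Implicit Defensive.
Import GRing.Theory.

(* Removing the largest entry from a tableau leaves it in a corner cell of
   the shape, and that cell either keeps other entries or becomes empty.  For
   the two-row shapes (p, q) inside (b, b) this gives a recursion in n for the
   number of tableaux with entries 1..n and m entries in the top row.  A
   (b, b) tableau has its largest entry in the bottom corner, so the sum over b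
   is a count of tableaux whose shape lies in the band 0 <= p - q <= 1.  With
   n + 1 entries, the counts for the bands d <= p - q <= d + 1 (without the
   one-row shape (d, 0)) satisfy a Pascal-type recursion in (n, m, d) that is
   solved by the binomial determinant
   C(n, m-1) C(n, m-1-d) - C(n, m) C(n, m-2-d), and for d = 0 this determinant
   times m is C(n+1, m-1) C(n, m-1). *)

Lemma card_by_class (T I : finType) (A : {set T}) (c : T -> {set I}) :
  {in A, forall x, #|c x| = 1} -> #|A| = \sum_i #|[set x in A | i \in c x]|.
Proof.
move=> one_class; rewrite -sum1_card (eq_bigr (fun x => #|c x|)) => [|x /one_class //].
under eq_bigr do rewrite -sum1_card big_mkcond /=.
rewrite exchange_big /=; apply: eq_bigr => i _.
rewrite -sum1_card [RHS]big_mkcond [LHS]big_mkcond; apply: eq_bigr => x _.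
by rewrite !inE; case: (x \in A); case: (i \in c x).
Qed.

Lemma sum_nat_two_points (I : finType) (i j : I) (x y : bool) (F : I -> nat) :
  i != j ->
  \sum_(k | ((k == i) && x) || ((k == j) && y)) F k =
  (if x then F i else 0) + (if y then F j else 0).
Proof.
move=> ij; rewrite big_mkcond (bigD1 i) //= (bigD1 j) 1?eq_sym //= big1 => [|k].
  by rewrite !eqxx eq_sym (negbTE ij) orbF addn0.
by case/andP => /negbTE -> /negbTE ->.
Qed.

Section Fillings.
Variable b : nat.
Local Notation filling n := {ffun cell b -> {set 'I_n}}.
Implicit Types (P : {set cell b}) (u v : cell b).

Definition has_shape n P (S : filling n) := [forall u, (S u != set0) == (u \in P)].

Definition is_set_partition n (S : filling n) :=
  [forall u, forall v, (u != v) ==> [disjoint S u & S v]]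
  && (\bigcup_u S u == [set: 'I_n]).

Definition increasing n (S : filling n) :=
  [forall u, forall v, ((u != v) && weakly_nw u v) ==>
     [forall x in S u, forall y in S v, (x < y)%N]].

(* Fillings of the whole 2 x b grid whose nonempty cells are exactly those of
   P, so that all shapes inside (b, b) live in one type. *)
Definition tableaux n P m : {set filling n} :=
  [set S | [&& has_shape P S, is_set_partition S, increasing S
             & top_row_entries S == m]].

Definition corner P u :=
  (u \in P) && [forall v, ((v != u) && weakly_nw u v) ==> (v \notin P)].

Section Reflection.
Variables (n : nat) (S : filling n).

Lemma has_shapeP P : reflect (forall u, (S u != set0) = (u \in P)) (has_shape P S).
Proof. by apply: (iffP forallP) => H u; [exact: eqP (H u) | rewrite H]. Qed.

Lemma is_set_partitionP : reflect
  ((forall u v x, x \in S u -> x \in S v -> u = v) /\ (forall x, exists u, x \in S u))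
  (is_set_partition S).
Proof.
apply: (iffP andP) => [[/forallP disj /eqP cov] | [one_cell cov]]; split.
- move=> u v x Su Sv; apply/eqP/negPn/negP => uv.
  by have /implyP/(_ uv)/disjointFr/(_ Su) := forallP (disj u) v; rewrite Sv.
- move=> x; have : x \in [set: 'I_n] by [].
  by rewrite -cov => /bigcupP [u _ Su]; exists u.
- apply/forallP => u; apply/forallP => v; apply/implyP => uv.
  apply/pred0P => x /=; apply/negbTE/andP => -[Su Sv].
  by move/eqP: uv; apply; apply: one_cell Su Sv.
- by apply/eqP/setP => x; rewrite inE; have [u Su] := cov x; apply/bigcupP; exists u.
Qed.

Lemma increasingP : reflect
  (forall u v x y, u != v -> weakly_nw u v -> x \in S u -> y \in S v -> (x < y)%N)
  (increasing S).
Proof.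
apply: (iffP forallP) => [inc u v x y uv nw Su Sv | inc u].
  by move: (inc u) => /forallP/(_ v); rewrite uv nw => /forallP/(_ x);
     rewrite Su => /forallP/(_ y); rewrite Sv.
apply/forallP => v; apply/implyP => /andP [uv nw].
by apply/forall_inP => x Su; apply/forall_inP => y Sv; apply: inc uv nw Su Sv.
Qed.

End Reflection.

Section AddMax.
Variable n : nat.
Implicit Type S : filling n.

Definition drop_max (S : filling n.+1) : filling n :=
  [ffun u => [set x | lift ord_max x \in S u]].

Definition add_max u0 (S : filling n) : filling n.+1 :=
  [ffun u => lift ord_max @: S u :|: (if u == u0 then [set ord_max] else set0)].

Variable u0 : cell b.

Lemma max_notin_lift (A : {set 'I_n}) : ord_max \notin lift ord_max @: A.
Proof. by apply/imsetP => -[x _ /eqP]; rewrite (negbTE (neq_lift _ _)). Qed.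

Lemma mem_add_max_lift S u x : (lift ord_max x \in add_max u0 S u) = (x \in S u).
Proof.
rewrite ffunE inE mem_imset; last exact: lift_inj.
by case: (u == u0); rewrite ?inE 1?eq_sym ?(negbTE (neq_lift _ _)) orbF.
Qed.

Lemma mem_add_max_max S u : (ord_max \in add_max u0 S u) = (u == u0).
Proof.
by rewrite ffunE inE (negbTE (max_notin_lift _)); case: (u == u0); rewrite ?inE ?eqxx.
Qed.

Lemma add_max_eq0 S u : (add_max u0 S u == set0) = (S u == set0) && (u != u0).
Proof.
rewrite ffunE setU_eq0 imset_eq0; case: (u == u0); last by rewrite eqxx !andbT.
by rewrite -[[set ord_max] == set0]cards_eq0 cards1 !andbF.
Qed.

Lemma add_maxK : cancel (add_max u0) drop_max.
Proof.
by move=> S; apply/ffunP => u; apply/setP => x; rewrite ffunE inE mem_add_max_lift.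
Qed.

Lemma drop_maxK (T : filling n.+1) :
  is_set_partition T -> ord_max \in T u0 -> add_max u0 (drop_max T) = T.
Proof.
move=> /is_set_partitionP [one_cell _] Tmax; apply/ffunP => u; apply/setP => y.
case: (unliftP ord_max y) => [x ->|->]; first by rewrite mem_add_max_lift ffunE inE.
rewrite mem_add_max_max; apply/eqP/idP => [-> // | Tu]; exact: one_cell Tu Tmax.
Qed.

Lemma top_row_entries_add_max S :
  top_row_entries (add_max u0 S) = top_row_entries S + (u0.1 == ord0).
Proof.
have card_add_max u : #|add_max u0 S u| = #|S u| + (u == u0).
  rewrite ffunE; case: (u == u0); last by rewrite setU0 addn0 card_imset //; exact: lift_inj.
  by rewrite setUC cardsU1 max_notin_lift addn1 card_imset //; exact: lift_inj.
rewrite /top_row_entries (eq_bigr _ (fun c _ => card_add_max (ord0, c))) big_split /=.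
congr (_ + _); case: u0 => r0 c0 /=; rewrite (bigD1 c0) //= big1 => [|c].
  by rewrite xpair_eqE eqxx andbT eq_sym addn0.
by rewrite xpair_eqE => /negbTE ->; rewrite andbF.
Qed.

Lemma has_shape_add_max P S : u0 \in P ->
  has_shape P (add_max u0 S) = has_shape P S || has_shape (P :\ u0) S.
Proof.
move=> Pu0; apply/has_shapeP/orP => [shape | [] /has_shapeP shape u].
- have off u : u != u0 -> (S u != set0) = (u \in P).
    by move=> uu0; rewrite -shape add_max_eq0 uu0 andbT.
  have [Su0 | Su0] := boolP (S u0 == set0); [right | left]; apply/has_shapeP => u.
    by rewrite !inE; case: (eqVneq u u0) => [-> | /off ->]; rewrite ?Su0.
  by case: (eqVneq u u0) => [-> | /off ->]; rewrite ?Su0 ?Pu0.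
- by rewrite add_max_eq0 negb_and negbK shape; case: eqVneq => [-> | _]; rewrite ?Pu0 ?orbF.
- rewrite add_max_eq0 negb_and negbK shape !inE.
  by case: eqVneq => [-> | _]; rewrite ?Pu0 ?orbF.
Qed.

Lemma is_set_partition_add_max S : is_set_partition (add_max u0 S) = is_set_partition S.
Proof.
apply/is_set_partitionP/is_set_partitionP => -[one_cell cov]; split.
- by move=> u v x; rewrite -!(mem_add_max_lift S); apply: one_cell.
- by move=> x; have [u] := cov (lift ord_max x); rewrite mem_add_max_lift; exists u.
- move=> u v y; case: (unliftP ord_max y) => [x ->|->].
    by rewrite !mem_add_max_lift; apply: one_cell.
  by rewrite !mem_add_max_max => /eqP -> /eqP ->.
- move=> y; case: (unliftP ord_max y) => [x ->|->].
    by have [u Su] := cov x; exists u; rewrite mem_add_max_lift.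
  by exists u0; rewrite mem_add_max_max.
Qed.

Lemma increasing_add_max S : increasing (add_max u0 S) =
  increasing S && [forall v, ((v != u0) && weakly_nw u0 v) ==> (S v == set0)].
Proof.
apply/increasingP/andP => [inc | [/increasingP inc /forallP after] u v x y uv nw].
  split.
    apply/increasingP => u v x y uv nw Su Sv.
    have := inc u v (lift ord_max x) (lift ord_max y) uv nw.
    by rewrite !mem_add_max_lift !lift_max; apply.
  apply/forallP => v; apply/implyP => /andP [vu0 nw]; apply/eqP/setP => y.
  rewrite inE; apply/negbTE/negP => Sy.
  have := inc u0 v ord_max (lift ord_max y); rewrite eq_sym vu0 nw.
  rewrite mem_add_max_max eqxx mem_add_max_lift => /(_ isT isT isT Sy).
  by rewrite ltnNge leq_ord.
case: (unliftP ord_max y) => [y' ->|->]; last first.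
  move=> Sx; rewrite mem_add_max_max => /eqP vu0.
  case: (unliftP ord_max x) Sx => [x' ->|->]; first by rewrite lift_max ltn_ord.
  by rewrite mem_add_max_max => /eqP uu0; rewrite uu0 vu0 eqxx in uv.
rewrite mem_add_max_lift; case: (unliftP ord_max x) => [x' ->|->].
  by rewrite mem_add_max_lift !lift_max; apply: inc.
rewrite mem_add_max_max => /eqP uu0; subst u.
by have /implyP := after v; rewrite eq_sym uv nw => /(_ isT) /eqP ->; rewrite inE.
Qed.

End AddMax.

Section Corners.
Variable n : nat.
Implicit Types (S : filling n) (T : filling n.+1).

Lemma corner_of_max P m T u :
  T \in tableaux n.+1 P m -> ord_max \in T u -> corner P u.
Proof.
rewrite inE => /and4P [/has_shapeP shape _ /increasingP inc _] Tu.
rewrite /corner -shape; apply/andP; split; first by apply/set0Pn; exists ord_max.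
apply/forallP => v; apply/implyP => /andP [vu nw]; rewrite -shape negbK.
apply/eqP/setP => y; rewrite inE; apply/negbTE/negP => Ty.
have := inc u v ord_max y; rewrite eq_sym vu nw Tu Ty => /(_ isT isT isT isT).
by rewrite ltnNge leq_ord.
Qed.

Lemma add_max_in_tableaux P m u0 S : corner P u0 ->
  (add_max u0 S \in tableaux n.+1 P (m + (u0.1 == ord0))) =
  (S \in tableaux n P m :|: tableaux n (P :\ u0) m).
Proof.
case/andP => Pu0 /forallP beyond.
have empty_beyond P' : P' \subset P -> has_shape P' S ->
    [forall v, ((v != u0) && weakly_nw u0 v) ==> (S v == set0)].
  move=> /subsetP sub /has_shapeP shape; apply/forallP => v; apply/implyP => vnw.
  by rewrite -[S v == set0]negbK shape; apply: contra (@sub v) (implyP (beyond v) vnw).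
rewrite !inE has_shape_add_max // is_set_partition_add_max increasing_add_max.
rewrite top_row_entries_add_max eqn_add2r.
have := empty_beyond P (subxx P); have := empty_beyond (P :\ u0) (subsetDl P _).
case: (has_shape P S); case: (has_shape (P :\ u0) S) => //= h h';
  [rewrite (h isT) | rewrite (h' isT) | rewrite (h isT)]; by rewrite andbT ?orbb ?orbF.
Qed.

Lemma card_tableaux_max_in P m u0 :
  #|[set T in tableaux n.+1 P m | ord_max \in T u0]| =
  if corner P u0 && ((u0.1 == ord0) <= m) then
    #|tableaux n P (m - (u0.1 == ord0))|
    + #|tableaux n (P :\ u0) (m - (u0.1 == ord0))|
  else 0.
Proof.
have part m' T : T \in tableaux n.+1 P m' -> is_set_partition T.
  by rewrite inE => /and4P [].
case: ifP => [/andP [cor top_m] | not_cor]; last first.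
  apply/eqP; rewrite cards_eq0; apply/eqP/setP => T; rewrite in_set0 inE.
  apply/negbTE/andP => -[T_tab Tu0]; move/negbT: not_cor; rewrite (corner_of_max T_tab Tu0).
  have := T_tab; rewrite -(drop_maxK (part _ _ T_tab) Tu0) inE top_row_entries_add_max.
  by case/and4P => _ _ _ /eqP <-; rewrite leq_addl.
rewrite -[in LHS](subnK top_m).
set A := tableaux n P _; set B := tableaux n (P :\ u0) _.
have -> : [set T in tableaux n.+1 P (m - (u0.1 == ord0) + (u0.1 == ord0)) | ord_max \in T u0]
    = add_max u0 @: (A :|: B).
  apply/setP => T; rewrite inE; apply/andP/imsetP => [[T_tab Tu0] | [S S_tab ->]].
    have T_part := part _ _ T_tab.
    exists (drop_max T); last by rewrite drop_maxK.
    by rewrite -add_max_in_tableaux // drop_maxK.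
  by rewrite add_max_in_tableaux // mem_add_max_max.
rewrite card_imset; last exact: can_inj (add_maxK u0).
apply/eqP; rewrite (leq_card_setU A B).2; apply/pred0P => S /=.
rewrite !inE; apply/negbTE/andP.
case=> /and4P [/has_shapeP shP _ _ _] /and4P [/has_shapeP shP' _ _ _].
by move: (shP u0) (shP' u0); rewrite setD11 (andP cor).1 => ->.
Qed.

Lemma card_tableaux_succ P m :
  #|tableaux n.+1 P m| =
  \sum_(u | corner P u && ((u.1 == ord0) <= m))
    (#|tableaux n P (m - (u.1 == ord0))|
     + #|tableaux n (P :\ u) (m - (u.1 == ord0))|).
Proof.
rewrite (@card_by_class _ _ _ (fun T => [set u | ord_max \in T u])) => [|T].
  by rewrite [RHS]big_mkcond; apply: eq_bigr => u _; rewrite -card_tableaux_max_in;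
     apply: eq_card => T; rewrite !inE.
rewrite inE => /and4P [_ /is_set_partitionP [one_cell cov] _ _].
have [u Tu] := cov ord_max; rewrite (@eq_card1 _ u) // => v; rewrite !inE.
by apply/idP/eqP => [Tv | ->]; [exact: one_cell Tv Tu|].
Qed.

End Corners.

Lemma card_tableaux0 P m : #|tableaux 0 P m| = (P == set0) && (m == 0).
Proof.
set E : filling 0 := [ffun => set0].
have filling0 (S : filling 0) : S = E by apply/ffunP => u; apply/setP => -[].
have top0 : top_row_entries E = 0.
  by rewrite /top_row_entries big1 // => c _; rewrite ffunE cards0.
have -> : tableaux 0 P m = if (P == set0) && (m == 0) then [set E] else set0.
  apply/setP => S; rewrite (filling0 S) inE top0 eq_sym.
  have -> : has_shape P E = (P == set0).
    apply/has_shapeP/eqP => [shape | -> u]; last by rewrite ffunE eqxx inE.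
    by apply/setP => u; rewrite -shape ffunE eqxx inE.
  have -> : is_set_partition E by apply/is_set_partitionP; split => [u v x | x]; case: x.
  have -> : increasing E by apply/increasingP => u v x; case: x.
  by case: ifP => _; rewrite ?inE ?eqxx.
by case: ifP; rewrite ?cards1 ?cards0.
Qed.

Lemma count_b_tableaux n m : count_b n b m = #|tableaux n [set: cell b] m|.
Proof.
apply: eq_card => S; rewrite !inE /is_SYTplus -!andbA.
suff -> : has_shape [set: cell b] S = [forall u, S u != set0] by [].
by apply: eq_forallb => u; rewrite inE eqb_id.
Qed.

End Fillings.

(* The number of tableaux of shape (p, q) with entries 1..n, m of them in the
   top row; the two summands remove n from the top, resp. bottom, corner. *)
Fixpoint nyoung (n p q m : nat) : nat :=
  if n is n'.+1 then
    (if (q < p) && (0 < m) then nyoung n' p q m.-1 + nyoung n' p.-1 q m.-1 else 0)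
    + (if 0 < q then nyoung n' p q m + nyoung n' p q.-1 m else 0)
  else [&& p == 0, q == 0 & m == 0].

Section YoungShapes.
Variable b' : nat.
Local Notation b := b'.+1.

Definition young (p q : nat) : {set cell b} :=
  [set u : cell b | u.2 < (if u.1 == ord0 then p else q)].

Definition top_corner p : cell b := (ord0, inord p.-1).
Definition bottom_corner q : cell b := (ord_max, inord q.-1).

Lemma row_cases (r : 'I_2) : r = ord0 \/ r = ord_max.
Proof. by case: r => [[|[|r]] //] ?; [left | right]; apply: val_inj. Qed.

Lemma eq_inord_pred (c : 'I_b) p : p <= b -> (c == inord p.-1) = (c == p.-1 :> nat).
Proof. by move=> pb; rewrite -val_eqE /= inordK //; lia. Qed.

Lemma corner_young p q u : q <= p -> p <= b ->
  corner (young p q) u =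
  ((u == top_corner p) && (q < p)) || ((u == bottom_corner q) && (0 < q)).
Proof.
move=> qp pb; case: u => r c; rewrite /corner /top_corner /bottom_corner !xpair_eqE !inE /=.
have [-> | ->] := row_cases r; rewrite /= ?andbF ?orbF eq_inord_pred //; last lia.
- apply/andP/andP => [[cp /forallP beyond] | [/eqP cp qp']].
    have q_le_c : q <= c.
      by have := beyond (ord_max, c); rewrite xpair_eqE /weakly_nw /= !inE /= leqnn; lia.
    have p_le_c1 : p <= c.+1.
      rewrite leqNgt; apply/negP => c1p.
      have := beyond (ord0, inord c.+1).
      by rewrite xpair_eqE /weakly_nw /= !inE /= -val_eqE /= inordK; lia.
    split; [apply/eqP |]; lia.
  split; first lia.
  apply/forallP => -[r' c']; rewrite xpair_eqE /weakly_nw !inE /=.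
  by have [-> | ->] := row_cases r'; rewrite /= ?eqxx -?val_eqE /=; lia.
- apply/andP/andP => [[cq /forallP beyond] | [/eqP cq q0]].
    have q_le_c1 : q <= c.+1.
      rewrite leqNgt; apply/negP => c1q.
      have := beyond (ord_max, inord c.+1).
      by rewrite xpair_eqE /weakly_nw /= !inE /= -val_eqE /= inordK; lia.
    split; [apply/eqP |]; lia.
  split; first lia.
  apply/forallP => -[r' c']; rewrite xpair_eqE /weakly_nw !inE /=.
  by have [-> | ->] := row_cases r'; rewrite /= ?eqxx -?val_eqE /=; lia.
Qed.

Lemma young_setD_top p q : 0 < p -> p <= b -> young p q :\ top_corner p = young p.-1 q.
Proof.
move=> p0 pb; apply/setP => -[r c]; rewrite !inE xpair_eqE /= eq_inord_pred //.
by have [-> | ->] := row_cases r => /=; lia.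
Qed.

Lemma young_setD_bottom p q : 0 < q -> q <= b ->
  young p q :\ bottom_corner q = young p q.-1.
Proof.
move=> q0 qb; apply/setP => -[r c]; rewrite !inE xpair_eqE /= eq_inord_pred //.
by have [-> | ->] := row_cases r => /=; lia.
Qed.

Lemma young_eq0 p q : (young p q == set0) = (p == 0) && (q == 0).
Proof.
apply/eqP/andP => [young0 | [/eqP -> /eqP ->]]; last first.
  by apply/setP => u; rewrite !inE if_same.
move/setP: young0 => young0; have := young0 (ord0, ord0); have := young0 (ord_max, ord0).
by rewrite !inE /=; lia.
Qed.

Lemma young_full : young b b = [set: cell b].
Proof. by apply/setP => u; rewrite !inE if_same ltn_ord. Qed.

Lemma card_tableaux_young n p q m : q <= p -> p <= b ->
  #|tableaux n (young p q) m| = nyoung n p q m.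
Proof.
elim: n p q m => [|n IHn] p q m qp pb; first by rewrite card_tableaux0 young_eq0 -andbA.
rewrite card_tableaux_succ.
rewrite (eq_bigl (fun u => ((u == top_corner p) && ((q < p) && (0 < m)))
                          || ((u == bottom_corner q) && (0 < q)))) => [|u]; last first.
  rewrite corner_young // andb_orl !andbA; congr (_ || _);
  by case: eqP => [-> | _] //=; rewrite leq0n andbT.
rewrite sum_nat_two_points ?xpair_eqE //= subn1 subn0.
congr (_ + _).
  by case: ifP => // /andP [q_lt_p _]; rewrite young_setD_top ?IHn //; lia.
by case: ifP => // q0; rewrite young_setD_bottom ?IHn //; lia.
Qed.

End YoungShapes.

Lemma nyoung_eq0 n p q m : n < p + q -> nyoung n p q m = 0.
Proof.
elim: n p q m => [|n IHn] p q m /= big; first by case: p q big => [|p] [|q].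
by rewrite !IHn ?if_same //; lia.
Qed.

Lemma nyoung_top0 n p q : 0 < p -> nyoung n p q 0 = 0.
Proof.
elim: n q => [|n IHn] q p0 /=; first by case: p p0.
by rewrite andbF !IHn ?if_same.
Qed.

(* [ntwo_rows n m d] counts the tableaux of shape (q + d, q) with q >= 1, and
   [nband n m d] those of shape (p, q) with p - q = d + 1, or p - q = d and
   q >= 1. *)
Definition ntwo_rows n m d := \sum_(q < n) nyoung n (d + q.+1) q.+1 m.

Definition nband n m d := ntwo_rows n m d + ntwo_rows n m d.+1 + nyoung n d.+1 0 m.

Lemma ntwo_rows_rec n m d :
  ntwo_rows n.+1 m.+1 d =
  (if d is d'.+1 then ntwo_rows n m d' + ntwo_rows n m d else 0)
  + nyoung n d.+1 0 m.+1 + ntwo_rows n m.+1 d.+1 + ntwo_rows n m.+1 d.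
Proof.
have bound p q k : n < p + q.+1 -> nyoung n p q.+1 k = 0.
  by move=> ?; apply: nyoung_eq0; lia.
have strict q : (q.+1 < d + q.+1) && (0 < m.+1) = (0 < d) by lia.
rewrite /ntwo_rows; under eq_bigr => q _ do rewrite /= strict.
rewrite !big_split /= [X in _ + (X + _)]big_ord_recr [X in _ + (_ + X)]big_ord_recl /=.
rewrite bound ?addn0 ?addn1; last lia.
rewrite [X in _ + (_ + (_ + X))]
  (eq_bigr (fun q : 'I_n => nyoung n (d.+1 + q.+1) q.+1 m.+1)) => [|q _]; last first.
  by rewrite /bump addSnnS.
case: d {strict} => [|d]; first by rewrite big1 //; lia.
under eq_bigr do rewrite [in (_ + _).-1]addSn /=.
rewrite big_split /= !big_ord_recr /= !bound; lia.
Qed.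

Lemma nband_top0 n d : nband n 0 d = 0.
Proof.
by rewrite /nband /ntwo_rows !big1 ?nyoung_top0 // => q _; rewrite nyoung_top0 //; lia.
Qed.

(* [0 < n] rules out the empty tableau, which would otherwise contribute for
   d = 0. *)
Lemma nband_rec n m d : 0 < n ->
  nband n.+1 m.+1 d =
  (if d is d'.+1 then nband n m d' else 0)
  + nband n m d + nband n m.+1 d.+1 + nband n m.+1 d.
Proof.
case: n => // n _; rewrite {1}/nband !(ntwo_rows_rec n.+1) /nband.
have -> : nyoung n.+2 d.+1 0 m.+1 = nyoung n.+1 d.+1 0 m + nyoung n.+1 d 0 m.
  by rewrite [LHS]/= addn0.
by case: d => [|d]; rewrite ?[nyoung n.+1 0 0 m]/=; lia.
Qed.

Lemma nband1 m d : nband 1 m d = (m == 1) && (d == 0).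
Proof.
rewrite /nband /ntwo_rows !big_ord1.
by case: m => [|[|m]]; case: d => [|d] //=; rewrite andbF if_same.
Qed.

Local Open Scope ring_scope.

Definition binz (a : nat) (i : int) : int := if i is Posz k then 'C(a, k)%:Z else 0.

Lemma binzS a i : binz a.+1 i = binz a i + binz a (i - 1).
Proof.
case: i => [[|k]|k] /=; first by rewrite !bin0.
  by rewrite binS PoszD subSS subn0.
by rewrite addr0.
Qed.

Definition binom_det (a : nat) (k j : int) : int :=
  binz a k * binz a j - binz a (k + 1) * binz a (j - 1).

Lemma binom_detS a k j : binom_det a.+1 k j =
  binom_det a k j + binom_det a (k - 1) j + binom_det a k (j - 1)
  + binom_det a (k - 1) (j - 1).
Proof. by rewrite /binom_det !binzS !addrK; ring. Qed.

Lemma binom_det_succr a k : binom_det a k (k + 1) = 0.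
Proof. by rewrite /binom_det addrK mulrC subrr. Qed.

Lemma binz_neg a i : i < 0 -> binz a i = 0.
Proof. by case: i. Qed.

Lemma binom_det_Nk a j : j < 0 -> binom_det a (-1) j = 0.
Proof.
move=> j_neg; rewrite /binom_det (binz_neg a (_ : j - 1 < 0)); last lia.
by rewrite mulr0 subr0 mul0r.
Qed.

Lemma nband_binom_det n m d :
  (nband n.+1 m d)%:Z = binom_det n (m%:Z - 1) (m%:Z - 1 - d%:Z).
Proof.
elim: n m d => [|n IHn] [|m] d; try by rewrite nband_top0 binom_det_Nk //; lia.
  rewrite nband1 /binom_det (_ : m.+1%:Z - 1 = m); last lia.
  by case: m => [|m]; case: d => [|d]; rewrite /= ?bin0n ?mul0r ?subrr.
have reorder (x y z t : int) : x + y + z + t = t + x + z + y by ring.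
rewrite nband_rec // 3!PoszD !IHn binom_detS reorder.
congr (_ + _ + _ + _); try by congr binom_det; lia.
case: d => [|d]; last by rewrite IHn; congr binom_det; lia.
rewrite [RHS](_ : _ = 0) // -(binom_det_succr n (m%:Z - 1)).
by congr binom_det; lia.
Qed.

Lemma binom_det_diag (a k : nat) :
  binom_det a k k * k.+1%:Z = ('C(a.+1, k) * 'C(a, k))%N%:Z.
Proof.
rewrite /binom_det; case: k => [|k]; first by rewrite /= !bin0 mulr1 mulr0 subr0 mulr1.
have -> : k.+1%:Z + 1 = k.+2%:Z by lia.
have -> : k.+1%:Z - 1 = k%:Z by lia.
rewrite /= binS PoszM PoszD.
have [ka | ak] := leqP k.+1 a; last first.
  by rewrite (bin_small ak) (@bin_small a k.+2) ?mul0r ?mulr0 ?subrr //; lia.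
have := mul_bin_left a k.+1; have := mul_bin_left a k.
rewrite (_ : (a - k = (a - k.+1).+1)%N); last lia.
set x := 'C(a, k); set y := 'C(a, k.+1); set z := 'C(a, k.+2); set t := (a - k.+1)%N.
move=> /(congr1 Posz) + /(congr1 Posz); rewrite !PoszM => yx zy.
have -> : (y%:Z * y%:Z - z%:Z * x%:Z) * k.+2%:Z
           = y%:Z * (k.+1%:Z * y%:Z) + y%:Z * y%:Z - x%:Z * (k.+2%:Z * z%:Z).
  by rewrite (_ : k.+2%:Z = k.+1%:Z + 1); [ring | lia].
by rewrite yx zy (_ : t.+1%:Z = t%:Z + 1); [ring | lia].
Qed.

Local Close Scope ring_scope.

Lemma sum_nyoung_square n m :
  \sum_(1 <= b < (n./2).+1) nyoung n b b m = ntwo_rows n m 0.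
Proof.
transitivity (\sum_(1 <= b < n.+1) nyoung n b b m).
  rewrite [RHS](@big_cat_nat _ _ _ (n./2).+1) //=; last by rewrite ltnS; lia.
  rewrite [X in _ = _ + X]big_nat_cond [X in _ = _ + X]big1 ?addn0 // => b.
  by case/andP=> /andP [b_big _] _; apply: nyoung_eq0; lia.
by rewrite big_add1 /= big_mkord.
Qed.

Lemma count_b_nyoung n b m : count_b n b.+1 m = nyoung n b.+1 b.+1 m.
Proof. by rewrite count_b_tableaux -young_full card_tableaux_young. Qed.

Lemma ntwo_rows_square n m : ntwo_rows n.+2 m.+1 0 = nband n.+1 m.+1 0.
Proof. by rewrite ntwo_rows_rec /nband; lia. Qed.

Theorem corollary8 (n m : nat) :
  2 <= n -> 1 <= m ->
  (\sum_(1 <= b < (n./2).+1) count_b n b m) * m =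
    'C(n.-1, m.-1) * 'C(n.-2, m.-1).
Proof.
case: n => [|[|n]] // _; case: m => [|m] // _.
rewrite (eq_big_nat _ _ (F2 := fun b => nyoung n.+2 b b m.+1)) => [|[|b] // _];
  last exact: count_b_nyoung.
rewrite sum_nyoung_square ntwo_rows_square; apply/eqP; rewrite -eqz_nat PoszM.
rewrite nband_binom_det (_ : (m.+1%:Z - 1 = m)%R) ?subr0 ?binom_det_diag //; lia.
Qed.
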